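(* Let $p$ be a prime, $q=p^r$, and let $l$ be an integer with $0\le l\le 2r-1$. Every root of the equation $X^{1+p^l}+1=0$ in $\mathrm{GF}(q^2)$ lies in $\mathrm{GF}(q)$ (equivalently, $\alpha^{1+p^l}+\beta^{1+p^l}\neq0$ for every basis $\{\alpha,\beta\}$ of $\mathrm{GF}(q^2)$ over $\mathrm{GF}(q)$) if and only if either (i) $p=2$ and $\gcd(2^l+1,2^r+1)=1$; or (ii) $p$ is odd and at least one of the following holds: (a) there is a power of two which divides $p^r-1$ but does not divide $p^l+1$, and $\gcd(p^l+1,p^r+1)=2$; (b) every power of two dividing $p^{2r}-1$ divides $p^l+1$. *)

From mathcomp Require Import all_boot all_order all_algebra all_field.
Set Implicit Arguments. Unset Strict Implicit. Unset Printing Implicit Defensive.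
Import GRing.Theory.
Local Open Scope ring_scope.

(* For a finite field F of order q^2 (q = p^r), the subfield GF(q) of F is
   the set of elements fixed by the q-th power Frobenius map x |-> x^q. *)
Definition in_GFq (F : finFieldType) (q : nat) (x : F) : bool := x ^+ q == x.

Definition roots_in_GFq (F : finFieldType) (p r l : nat) : Prop :=
  forall x : F, x ^+ (1 + p ^ l)%N + 1 = 0 -> in_GFq (p ^ r)%N x.

From mathcomp Require Import all_boot all_order all_algebra all_field.
From mathcomp Require Import cyclic zify.
Set Implicit Arguments. Unset Strict Implicit. Unset Printing Implicit Defensive.
Import GRing.Theory.

(* The multiplicative group of F is cyclic of order q^2 - 1 = (q - 1)(q + 1),
   where q = p^r.  For a generator w, the w^i lying in GF(q) are those with
   q + 1 | i, and -1 = w^c with c = 0 if p = 2 and c = (q^2 - 1)/2 otherwise.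
   Hence, with d = p^l + 1, the condition says that every solution j of
   j d = c (mod q^2 - 1) is a multiple of q + 1.  Shifting a solution by
   (q - 1)(q + 1)/gcd(d, q + 1) gives another one, so once a solution exists
   the condition forces gcd(d, q + 1) | q - 1, hence gcd(d, q + 1) | 2; for
   p = 2 (c = 0) this settles everything.  For odd p there is no solution
   exactly when the 2-part of q^2 - 1 divides d, which is (b); otherwise a
   solution m (q + 1) makes m d an odd multiple of (q - 1)/2, and comparing
   2-adic valuations yields (a). *)

Definition solutions_dvd (N M d c : nat) : Prop :=
  forall j, j * d = c %[mod N] -> M %| j.

Lemma eqn_mod_pmul2r p m n d : 0 < p ->
  (m * p == n * p %[mod d * p]) = (m == n %[mod d]).
Proof. by move=> p_gt0; rewrite -!muln_modl eqn_pmul2r. Qed.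

Lemma dvdn_eqmod m x y N : m %| N -> x = y %[mod N] -> (m %| x) = (m %| y).
Proof. by move=> m_N xy; rewrite /dvdn -(modn_dvdm x m_N) xy modn_dvdm. Qed.

Lemma dvdn2_pred_succ e q : 0 < q -> e %| q - 1 -> e %| q + 1 -> e %| 2.
Proof.
move=> q_gt0 e_qB1 e_qD1; have := dvdn_sub e_qD1 e_qB1.
by rewrite (_ : _ - _ = 2) //; lia.
Qed.

Lemma odd_pred_half q : odd q -> q - 1 = (q - 1)./2 * 2.
Proof.
case: q => // q; rewrite subn1 /= muln2 => /negbTE q_even.
by rewrite -{1}[q]odd_double_half q_even.
Qed.

Lemma congr_solvable N d c : 0 < d -> gcdn d N %| c ->
  exists j, j * d = c %[mod N].
Proof.
move=> d_gt0 /dvdnP[m ->]; have [u v Euv _] := egcdnP N d_gt0.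
by exists (u * m); rewrite mulnAC Euv mulnDl mulnAC modnMDl mulnC.
Qed.

Lemma odd_multiple_ndvd K x : 0 < K -> x = K %[mod K * 2] ->
  ~~ (2 ^ logn 2 (K * 2) %| x).
Proof.
move=> K_gt0 /(dvdn_eqmod (pfactor_dvdnn 2 (K * 2)))->.
by rewrite pfactor_dvdn // lognM // (logn_prime _ (isT : prime 2)) addn1 ltnn.
Qed.

Lemma solutions_dvd_gcdn a M d c j0 : 0 < M -> j0 * d = c %[mod a * M] ->
  solutions_dvd (a * M) M d c -> gcdn d M %| a.
Proof.
move=> M_gt0 j0_sol all_dvd.
set e := gcdn d M; set u := M %/ e.
have Mue : M = u * e by rewrite divnK ?dvdn_gcdr.
have u_gt0 : 0 < u by move: M_gt0; rewrite Mue muln_gt0 => /andP[].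
have shifted_sol : (j0 + a * u) * d = c %[mod a * M].
  have Eaud : a * u * d = d %/ e * (a * M).
    by rewrite -{1}(divnK (dvdn_gcdl d M)) -/e Mue; nia.
  by rewrite mulnDl Eaud addnC modnMDl.
have := all_dvd _ shifted_sol.
by rewrite dvdn_addr ?(all_dvd _ j0_sol) // {1}Mue [a * u]mulnC dvdn_pmul2l.
Qed.

Lemma solutions_dvd_even q d : ~~ odd q -> 0 < q ->
  solutions_dvd ((q - 1) * (q + 1)) (q + 1) d 0 <-> gcdn d (q + 1) = 1.
Proof.
move=> q_even q_gt0; have M_gt0 : 0 < q + 1 by rewrite addn1.
split=> [all_dvd | coprime_dM j].
- have e_dvd_qB1 := solutions_dvd_gcdn M_gt0 (erefl : 0 * d = 0 %[mod _]) all_dvd.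
  have coprime_2M : coprime 2 (q + 1) by rewrite coprime2n oddD (negbTE q_even).
  have := coprime_dvdl (dvdn2_pred_succ q_gt0 e_dvd_qB1 (dvdn_gcdr d _)) coprime_2M.
  by rewrite /coprime -gcdnA gcdnn => /eqP.
- move=> /(dvdn_eqmod (dvdnn _)); rewrite dvdn0 => /(dvdn_trans (dvdn_mull _ (dvdnn _))).
  by rewrite Gauss_dvdl // /coprime gcdnC coprime_dM.
Qed.

Section OddCase.

Variables q a d : nat.
Hypotheses (Ea : q - 1 = a * 2) (a_gt0 : 0 < a) (d_even : ~~ odd d) (d_gt0 : 0 < d).

Local Notation N := ((q - 1) * (q + 1)).
Local Notation c := (a * (q + 1)).

Let M_gt0 : 0 < q + 1. Proof. by rewrite addn1. Qed.
Let q_gt0 : 0 < q. Proof. by have := Ea; have := a_gt0; lia. Qed.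
Let q_odd : odd q. Proof. by rewrite -[q](@subnK 1) // Ea addn1 /= oddM andbF. Qed.
Let c_gt0 : 0 < c. Proof. by rewrite muln_gt0 a_gt0. Qed.
Let EN : N = c * 2. Proof. by rewrite Ea mulnAC. Qed.

Lemma solutions_dvd_odd_of_gcdn2 k : 2 ^ k %| q - 1 -> ~~ (2 ^ k %| d) ->
  gcdn d (q + 1) = 2 -> solutions_dvd N (q + 1) d c.
Proof.
move=> two_k_qB1 two_k_d gcd2 j /eqP sol.
have /dvdnP[d' Ed] : 2 %| d by have := dvdn_gcdl d (q + 1); rewrite gcd2.
set b := a.+1; have Eb : q + 1 = b * 2 by rewrite /b mulSn addnC -Ea; lia.
have b_gt0 : 0 < b by [].
have coprime_bd' : coprime b d'.
  by rewrite /coprime -(eqn_pmul2r (isT : 0 < 2)) muln_gcdl -Ed -Eb gcdnC gcd2.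
have sol_half : j * d' == a * b %[mod a * b * 2].
  rewrite -(eqn_mod_pmul2r _ _ _ (isT : 0 < 2)).
  have -> : j * d' * 2 = j * d by rewrite Ed mulnA.
  have -> : a * b * 2 * 2 = N by rewrite Ea Eb; lia.
  by rewrite -mulnA -Eb.
have /dvdnP[w Ej] : b %| j.
  rewrite -(Gauss_dvdl _ coprime_bd') (dvdn_eqmod _ (eqP sol_half)).
    by rewrite dvdn_mull.
  by rewrite -mulnA dvdn_mull ?dvdn_mulr.
have sol_w : w * d' == a %[mod a * 2].
  by rewrite -(eqn_mod_pmul2r _ _ _ b_gt0) mulnAC -Ej mulnAC.
rewrite Ej Eb [w * b]mulnC dvdn_pmul2l // dvdn2.
apply: contra two_k_d => w_odd.
rewrite -(Gauss_dvdr _ (coprimeXl k (_ : coprime 2 w))) ?coprime2n //.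
apply: dvdn_trans two_k_qB1 _.
rewrite Ea Ed mulnA dvdn_pmul2r //.
by rewrite (dvdn_eqmod (dvdn_mulr 2 (dvdnn a)) (eqP sol_w)).
Qed.

Lemma gcdn2_of_solutions_dvd_odd : ~~ (2 ^ logn 2 N %| d) ->
  solutions_dvd N (q + 1) d c ->
  exists k, (2 ^ k %| q - 1) && ~~ (2 ^ k %| d) /\ gcdn d (q + 1) = 2.
Proof.
move=> two_N_d all_dvd.
have [j0 j0_sol] : exists j0, j0 * d = c %[mod N].
  apply: congr_solvable d_gt0 _; set g := gcdn d N.
  have [h Eh] := dvdnP (dvdn_gcdr d N : g %| N).
  have : ~~ odd h.
    apply: contra two_N_d => h_odd; apply: dvdn_trans (dvdn_gcdl d N).
    rewrite -(Gauss_dvdr _ (coprimeXl _ (_ : coprime 2 h))) ?coprime2n //.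
    by rewrite -Eh pfactor_dvdnn.
  rewrite -dvdn2 => /dvdnP[h' Eh'].
  suff -> : c = h' * g by rewrite dvdn_mull.
  by apply/eqP; rewrite -(eqn_pmul2r (isT : 0 < 2)) -EN Eh Eh' mulnAC.
have e_dvd_qB1 := solutions_dvd_gcdn M_gt0 j0_sol all_dvd.
have gcd2 : gcdn d (q + 1) = 2.
  apply/eqP; rewrite eqn_dvd (dvdn2_pred_succ q_gt0 e_dvd_qB1 (dvdn_gcdr _ _)).
  by rewrite dvdn_gcd !dvdn2 d_even oddD q_odd.
exists (logn 2 (q - 1)); rewrite pfactor_dvdnn gcd2; split => //.
have /dvdnP[m Ej0] := all_dvd _ j0_sol.
have : m * d = a %[mod a * 2].
  by apply/eqP; rewrite -(eqn_mod_pmul2r _ _ _ M_gt0) mulnAC -Ej0 -Ea; apply/eqP.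
move/(odd_multiple_ndvd a_gt0); rewrite -Ea; apply: contra; exact: dvdn_mull.
Qed.

Lemma solutions_dvd_odd : solutions_dvd N (q + 1) d c <->
  (exists k, (2 ^ k %| q - 1) && ~~ (2 ^ k %| d) /\ gcdn d (q + 1) = 2) \/
  (forall k, 2 ^ k %| N -> 2 ^ k %| d).
Proof.
have N_gt0 : 0 < N by rewrite EN muln_gt0 c_gt0.
split=> [all_dvd | [[k [/andP[two_k_qB1 two_k_d] gcd2]] | two_N_d]].
- have [two_N_d | two_N_nd] := boolP (2 ^ logn 2 N %| d).
    right=> k; rewrite pfactor_dvdn // => k_le.
    exact: dvdn_trans (dvdn_exp2l 2 k_le) two_N_d.
  by left; apply: gcdn2_of_solutions_dvd_odd.
- exact: solutions_dvd_odd_of_gcdn2 two_k_qB1 two_k_d gcd2.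
- move=> j; rewrite EN => /(odd_multiple_ndvd c_gt0); rewrite -EN.
  by rewrite dvdn_mull // two_N_d // pfactor_dvdnn.
Qed.

End OddCase.

Local Open Scope ring_scope.

Lemma expf_card_pred (F : finFieldType) (x : F) : x != 0 -> x ^+ #|F|.-1 = 1.
Proof.
move=> x_neq0; apply: (mulIf x_neq0).
by rewrite mul1r -exprSr prednK ?expf_card // ltnW ?finNzRing_gt1.
Qed.

Lemma finField_prim_root (F : finFieldType) :
  exists w : F, (#|F|.-1).-primitive_root w.
Proof.
have /hasP[w _ prim_w] : has (#|F|.-1).-primitive_root (enum (predC1 (0 : F))).
  apply: has_prim_root; last by rewrite -cardE cardC1.
  - by rewrite -subn1 subn_gt0 finNzRing_gt1.
  - by apply/allP => x; rewrite mem_enum inE unity_rootE => /expf_card_pred ->.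
  - exact: enum_uniq.
by exists w.
Qed.

Lemma prim_root_expr_half (R : idomainType) n (w : R) :
  (n * 2).-primitive_root w -> w ^+ n = -1.
Proof.
move=> prim_w; have := prim_order_gt0 prim_w; rewrite muln_gt0 andbT => n_gt0.
have : (w ^+ n) ^+ 2 == 1 by rewrite -exprM (prim_expr_order prim_w).
rewrite sqrf_eq1 -(prim_order_dvd prim_w) => /orP[/(dvdn_leq n_gt0) | /eqP //].
by rewrite leqNgt ltn_Pmulr.
Qed.

Lemma prim_root_expr_fixed (R : idomainType) (w : R) (q i : nat) :
  (1 < q)%N -> ((q - 1) * (q + 1)).-primitive_root w ->
  ((w ^+ i) ^+ q == w ^+ i) = (q + 1 %| i)%N.
Proof.
move=> q_gt1 prim_w; rewrite -exprM (eq_prim_root_expr prim_w).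
rewrite eqn_mod_dvd ?leq_pmulr 1?ltnW //.
have -> : (i * q - i = i * (q - 1))%N by rewrite mulnBr muln1.
by rewrite [((q - 1) * _)%N]mulnC dvdn_pmul2r // subn_gt0.
Qed.

Lemma roots_fixed_iff_solutions_dvd (F : finFieldType) (w : F) (q d c : nat) :
  (1 < q)%N -> (0 < d)%N -> #|F|.-1 = ((q - 1) * (q + 1))%N ->
  ((q - 1) * (q + 1)).-primitive_root w -> w ^+ c = -1 ->
  (forall x : F, x ^+ d + 1 = 0 -> x ^+ q == x) <->
  solutions_dvd ((q - 1) * (q + 1)) (q + 1) d c.
Proof.
move=> q_gt1 d_gt0 cardF prim_w w_c.
have root_expr i :
    ((w ^+ i) ^+ d + 1 == 0) = (i * d == c %[mod (q - 1) * (q + 1)])%N.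
  by rewrite -exprM addr_eq0 -w_c (eq_prim_root_expr prim_w).
split=> [roots_fixed j j_sol | all_dvd x x_root].
  rewrite -(prim_root_expr_fixed _ q_gt1 prim_w) roots_fixed //.
  by apply/eqP; rewrite root_expr j_sol.
have x_neq0 : x != 0.
  by apply: contra_eq_neq x_root => ->; rewrite expr0n gtn_eqF // add0r oner_eq0.
have x_unity : x ^+ ((q - 1) * (q + 1)) = 1 by rewrite -cardF expf_card_pred.
have [i Ex] := prim_rootP prim_w x_unity.
rewrite Ex prim_root_expr_fixed //; apply: all_dvd; apply/eqP.
by rewrite -root_expr -Ex x_root.
Qed.

Local Close Scope ring_scope.

Theorem proposition5 (p r l : nat) (F : finFieldType) :
  prime p -> (0 < r)%N -> (l <= 2 * r - 1)%N -> #|F| = (p ^ (2 * r))%N ->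
  roots_in_GFq F p r l <->
  ((p = 2 /\ gcdn (2 ^ l + 1) (2 ^ r + 1) = 1)
   \/ (odd p /\
       ((exists k : nat, (2 ^ k %| p ^ r - 1) && ~~ (2 ^ k %| p ^ l + 1)
                         /\ gcdn (p ^ l + 1) (p ^ r + 1) = 2)
        \/ (forall k : nat, 2 ^ k %| p ^ (2 * r) - 1 -> 2 ^ k %| p ^ l + 1)))).
Proof.
move=> p_prime r_gt0 _ cardF.
have q_gt1 : 1 < p ^ r by rewrite -(expn0 p) ltn_exp2l ?prime_gt1.
have EN : p ^ (2 * r) - 1 = (p ^ r - 1) * (p ^ r + 1).
  by rewrite mulnC expnM; move: q_gt1; set q := p ^ r; nia.
have cardF1 : #|F|.-1 = (p ^ r - 1) * (p ^ r + 1) by rewrite cardF -EN subn1.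
have [w] := finField_prim_root F; rewrite cardF1 => prim_w.
have d_gt0 : 0 < p ^ l + 1 by rewrite addn1.
rewrite /roots_in_GFq /in_GFq EN [1 + _]addnC.
have [p2 | p_odd] := even_prime p_prime.
- subst p; have w_0 : (w ^+ 0 = -1 :> F)%R.
    by rewrite expr0 oppr_pchar2 // (card_finPcharP cardF).
  have q_even : ~~ odd (2 ^ r) by rewrite oddX /= orbF -lt0n.
  rewrite (roots_fixed_iff_solutions_dvd q_gt1 d_gt0 cardF1 prim_w w_0).
  rewrite solutions_dvd_even ?(ltnW q_gt1) //.
  by split=> [coprime_dM | [[_ //] | []//]]; left.
- have q_odd : odd (p ^ r) by rewrite oddX p_odd orbT.
  have EqB1 := odd_pred_half q_odd.
  have a_gt0 : 0 < (p ^ r - 1)./2.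
    by move: q_gt1; rewrite -subn_gt0 {1}EqB1 muln_gt0 andbT.
  have w_half : (w ^+ ((p ^ r - 1)./2 * (p ^ r + 1)) = -1)%R.
    by apply: prim_root_expr_half; rewrite mulnAC -EqB1.
  have d_even : ~~ odd (p ^ l + 1) by rewrite oddD oddX p_odd orbT.
  rewrite (roots_fixed_iff_solutions_dvd q_gt1 d_gt0 cardF1 prim_w w_half).
  rewrite (solutions_dvd_odd EqB1 a_gt0 d_even d_gt0).
  split=> [sol | [[p2 _] | [_ //]]]; first by right.
  by rewrite p2 in p_odd.
Qed.
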